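(* For every $\alpha>0$ there exists a 1-2-metric such that the greedy-routing network creation game on it with edge price $\alpha$ admits an improving response cycle.
   Context: A 1-2-metric is a finite metric space $(\mathcal{P},d)$ with $d(u,v)\in\{1,2\}$ for all distinct $u,v$. Game: agents are the points of $\mathcal{P}$; agent $u$'s strategy is $S_u\subseteq\mathcal{P}\setminus\{u\}$; a profile $\mathbf{s}$ defines the directed network with arcs $(u,v)$, $v\in S_u$, of length $d(u,v)$. A greedy path from $u$ to $v$ is a directed path $u=x_1,\dots,x_j=v$ of arcs with $d(x_i,v)>d(x_{i+1},v)$ for all $i$. $\mathrm{stretch}(u,v)$ is the minimum length of a greedy path from $u$ to $v$ divided by $d(u,v)$, or a fixed sufficiently large penalty constant $Z$ if none exists. Cost: $c_u(\mathbf{s})=\sum_{v\ne u}\mathrm{stretch}(u,v)+\alpha|S_u|$. An improving response of $u$ to $\mathbf{s}$ is a strategy $S'_u$ with $c_u(S'_u,\mathbf{s}_{-u})<c_u(\mathbf{s})$. An improving response cycle is a sequence of profiles $\mathbf{s}_0,\mathbf{s}_1,\dots,\mathbf{s}_k=\mathbf{s}_0$ ($k\ge1$) where each $\mathbf{s}_i$ arises from $\mathbf{s}_{i-1}$ by a single agent switching to an improving response. *)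

From mathcomp Require Import all_boot.
From Stdlib Require Import Reals ClassicalDescription.

Set Implicit Arguments.
Unset Strict Implicit.
Unset Printing Implicit Defensive.

Section GreedyRouting.

Variable T : finType.

Definition metric12 (d : T -> T -> nat) : Prop :=
  [/\ forall x, d x x = 0%N,
      forall x y, d x y = d y x,
      forall x y z, (d x z <= d x y + d y z)%N
    & forall x y, x <> y -> d x y = 1%N \/ d x y = 2%N].

Variable d : T -> T -> nat.

(* A strategy profile: agent u buys the arcs to the points of s u. *)
Definition profile := {ffun T -> {set T}}.

Definition valid_strategy (u : T) (S : {set T}) : Prop := u \notin S.
Definition valid_profile (s : profile) : Prop :=
  forall u, valid_strategy u (s u).

Definition greedy_path (s : profile) (u v : T) (p : seq T) : Prop :=
  path (fun x y => (y \in s x) && (d y v < d x v)%N) u p /\ last u p = v.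

Definition path_len (u : T) (p : seq T) : nat := sumn (pairmap d u p).

Definition has_greedy_len (s : profile) (u v : T) (L : nat) : Prop :=
  exists p, greedy_path s u v p /\ path_len u p = L.

Definition greedy_len_pred (s : profile) (u v : T) : pred nat :=
  fun L => if excluded_middle_informative (has_greedy_len s u v L)
           then true else false.

Lemma greedy_len_pred_ex (s : profile) (u v : T) :
  (exists L, has_greedy_len s u v L) -> exists L, greedy_len_pred s u v L.
Proof.
move=> [L HL]; exists L; rewrite /greedy_len_pred.
by case: excluded_middle_informative.
Qed.

Definition stretch (Z : R) (s : profile) (u v : T) : R :=
  match excluded_middle_informative (exists L, has_greedy_len s u v L) with
  | left H => (INR (ex_minn (greedy_len_pred_ex H)) / INR (d u v))%R
  | right _ => Z
  end.

Definition cost (alpha Z : R) (s : profile) (u : T) : R :=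
  (foldr (fun v acc => stretch Z s u v + acc) 0 [seq v <- enum T | v != u]
   + alpha * INR #|s u|)%R.

Definition update (s : profile) (u : T) (S : {set T}) : profile :=
  [ffun x => if x == u then S else s x].

Definition improving_step (alpha Z : R) (s s' : profile) : Prop :=
  exists u S, valid_strategy u S /\ s' = update s u S /\
    (cost alpha Z (update s u S) u < cost alpha Z s u)%R.

(* Improving response cycle s0, s_1, ..., s_k = s0 with k >= 1, where
   ss = [:: s_1; ...; s_k]. *)
Definition improving_response_cycle (alpha Z : R) (s0 : profile)
    (ss : seq profile) : Prop :=
  [/\ valid_profile s0, (0 < size ss)%N,
      last s0 ss = s0
    & forall i, (i < size ss)%N ->
        improving_step alpha Z (nth s0 (s0 :: ss) i) (nth s0 ss i)].

End GreedyRouting.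

(* In a 1-2-metric every greedy path has at most two arcs, so each stretch is
   1, 3/2 or the penalty Z, and an agent's cost is determined by how many
   points it cannot reach, the sum of its doubled finite stretches, and its
   number of arcs.  On the 4-cycle 0-1-3-2 (diagonals at distance 2) there is
   a cycle of eight strategy changes alternating between two kinds of moves:
   an agent buys an arc that makes a previously unreachable point reachable
   (profitable once Z exceeds alpha + 1), or an agent drops an arc that no
   longer shortens any of its greedy paths (saving alpha). *)

From mathcomp Require Import all_boot.
From Stdlib Require Import Reals Lra ClassicalDescription.

Set Implicit Arguments.
Unset Strict Implicit.
Unset Printing Implicit Defensive.

Lemma path_ltn_size (T : Type) (f : T -> nat) (x : T) (p : seq T) :
  path (fun y z => f z < f y) x p -> size p <= f x.
Proof.
elim: p x => [|y p IHp] x //= /andP[lt_yx /IHp le_py].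
exact: leq_ltn_trans le_py lt_yx.
Qed.

Lemma metric12_of_dist (T : finType) (d : T -> T -> nat) :
  (forall x, d x x = 0) -> (forall x y, d x y = d y x) ->
  (forall x y, x != y -> (d x y == 1) || (d x y == 2)) -> metric12 d.
Proof.
move=> d0 dC d12; split=> // [x y z|x y /eqP xy]; last first.
  by case/orP: (d12 x y xy) => /eqP ->; [left | right].
have d_pos a b : a != b -> 0 < d a b by move/d12/orP => [] /eqP ->.
have [-> | xz] := eqVneq x z; first by rewrite d0.
have [-> | yx] := eqVneq y x; first by rewrite d0.
have [-> | yz] := eqVneq y z; first by rewrite d0 addn0.
case/orP: (d12 x z xz) => /eqP ->; first by rewrite ltn_addr ?d_pos // eq_sym.
by rewrite -(addn1 1) leq_add ?d_pos // eq_sym.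
Qed.

Lemma update_eq (T : finType) (s s' : profile T) (u : T) :
  (forall x, x != u -> s' x = s x) -> s' = update s u (s' u).
Proof.
by move=> s's; apply/ffunP => x; rewrite ffunE; case: eqVneq => [-> | /s's].
Qed.

Lemma improving_response_cycle_of_path (T : finType) (d : T -> T -> nat)
    (alpha Z : R) (X : Type) (e : rel X) (net : X -> profile T) (x0 : X)
    (xs : seq X) :
  (forall x y, e x y -> improving_step d alpha Z (net x) (net y)) ->
  valid_profile (net x0) -> 0 < size xs -> last x0 xs = x0 -> path e x0 xs ->
  improving_response_cycle d alpha Z (net x0) (map net xs).
Proof.
move=> e_step valid0 xs_gt0 last_xs /(pathP x0) e_xs.
split; rewrite ?size_map ?last_map ?last_xs // => i lt_i.
rewrite -map_cons !(nth_map x0) //; last exact: ltnW.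
exact: e_step (e_xs i lt_i).
Qed.

Section OneTwoMetric.

Variables (T : finType) (d : T -> T -> nat).
Hypothesis d12 : metric12 d.

Lemma metric12_refl x : d x x = 0.
Proof. by case: d12. Qed.

Lemma metric12_le2 x y : d x y <= 2.
Proof.
case: d12 => d0 _ _ d12'; have [-> | /eqP xy] := eqVneq x y; first by rewrite d0.
by case: (d12' _ _ xy) => ->.
Qed.

Lemma metric12_eq0 x y : (d x y == 0) = (x == y).
Proof.
case: d12 => d0 _ _ d12'; have [-> | /eqP xy] := eqVneq x y; first by rewrite d0.
by case: (d12' _ _ xy) => ->.
Qed.

Lemma greedy_path_size (s : profile T) u v p :
  greedy_path d s u v p -> size p <= 2.
Proof.
case=> path_p _; apply: leq_trans (metric12_le2 u v).
by apply: (path_ltn_size (f := d^~ v)); apply: sub_path path_p => x y /andP[].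
Qed.

(* Unlike [enum T], an explicit enumeration [r] evaluates under [vm_compute],
   which the concrete instance below relies on. *)
Variable r : seq T.
Hypothesis r_enum : enum T = r.

Lemma mem_r x : x \in r.
Proof. by rewrite -r_enum mem_enum. Qed.

Variable adj : rel T.

Definition greedy_lengths (u v : T) : seq nat :=
  (if adj u v then [:: d u v] else [::]) ++
  [seq d u x + d x v | x <- r & [&& adj u x, adj x v & 0 < d x v < d u v]].

Lemma greedy_lengthsP (s : profile T) u v L :
  (forall x y, (y \in s x) = adj x y) -> u != v ->
  has_greedy_len d s u v L <-> L \in greedy_lengths u v.
Proof.
move=> s_adj uv; rewrite /greedy_lengths mem_cat; split.
  move=> [p [[path_p last_p] <-]]; rewrite /path_len.
  have := greedy_path_size (conj path_p last_p).
  case: p path_p last_p => [|y [|z [|//]]] /=.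
  - by move=> _ eq_uv; rewrite eq_uv eqxx in uv.
  - rewrite s_adj andbT => /andP[uy _] yv _; subst y.
    by rewrite addn0 uy mem_head.
  rewrite !s_adj andbT => /andP[/andP[uy lt_yv] /andP[yv]] + /esym zv _.
  subst z; rewrite metric12_refl addn0 => yv_gt0.
  by apply/orP; right; apply: map_f; rewrite mem_filter mem_r uy yv yv_gt0 lt_yv.
case/orP=> [|/mapP[x]].
  case: ifP => // uv_adj; rewrite inE => /eqP ->.
  exists [:: v]; split; last by rewrite /path_len /= addn0.
  by split=> //=; rewrite s_adj uv_adj metric12_refl lt0n metric12_eq0 uv.
rewrite mem_filter => /andP[/and3P[ux xv /andP[xv_gt0 lt_xv]] _] ->.
exists [:: x; v]; split; last by rewrite /path_len /= addn0.
by split=> //=; rewrite !s_adj ux xv lt_xv metric12_refl xv_gt0.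
Qed.

(* [seq_min [::] = 0] is a junk value; it makes [twice_stretch] vanish on
   unreachable points. *)
Definition seq_min (l : seq nat) : nat :=
  if l is m :: l' then foldr minn m l' else 0.

Lemma seq_min_mem l : l != [::] -> seq_min l \in l.
Proof.
case: l => // m l _ /=; elim: l => [|n l IHl] /=; first exact: mem_head.
rewrite /minn; case: ifP => _; rewrite !inE ?eqxx ?orbT //.
by move: IHl; rewrite inE => /orP[] ->; rewrite ?orbT.
Qed.

Lemma seq_min_le l n : n \in l -> seq_min l <= n.
Proof.
case: l => // m l /=; elim: l n => [|k l IHl] n /=.
  by rewrite inE => /eqP ->.
rewrite !inE => /or3P[/eqP -> | /eqP -> | n_l]; last 2 first.
- exact: geq_minl.
- by rewrite geq_min IHl ?inE ?n_l ?orbT.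
by rewrite geq_min IHl ?inE ?eqxx ?orbT.
Qed.

Definition unreachable (u v : T) : bool := greedy_lengths u v == [::].

(* As d u v is 1 or 2, twice the stretch (minimal greedy length) / d u v
   is the natural number 2 %/ d u v * (minimal greedy length). *)
Definition twice_stretch (u v : T) : nat :=
  2 %/ d u v * seq_min (greedy_lengths u v).

Lemma stretchE Z (s : profile T) u v :
  (forall x y, (y \in s x) = adj x y) -> u != v ->
  stretch d Z s u v = (INR (unreachable u v) * Z + INR (twice_stretch u v) / 2)%R.
Proof.
move=> s_adj uv; rewrite /stretch /unreachable /twice_stretch.
case: excluded_middle_informative => [reach | unreach]; last first.
  have -> : greedy_lengths u v = [::].
    case E: greedy_lengths => [//|L l]; case: unreach; exists L.
    by apply/(greedy_lengthsP _ s_adj uv); rewrite E mem_head.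
  rewrite muln0 /=; lra.
have [L /(greedy_lengthsP _ s_adj uv) L_gl] := reach.
have gl_nil : greedy_lengths u v != [::] by apply: contraTneq L_gl => ->.
have -> : ex_minn (greedy_len_pred_ex reach) = seq_min (greedy_lengths u v).
  case: ex_minnP => m + min_m; rewrite /greedy_len_pred.
  case: excluded_middle_informative => // /(greedy_lengthsP _ s_adj uv) m_gl _.
  apply/eqP; rewrite eqn_leq seq_min_le // min_m // /greedy_len_pred.
  case: excluded_middle_informative => // [[]].
  exact/(greedy_lengthsP _ s_adj uv)/seq_min_mem.
rewrite (negbTE gl_nil) /=.
have:= metric12_le2 u v; have:= metric12_eq0 u v; rewrite (negbTE uv).
case: (d u v) => [|[|[|]]] //= _ _; rewrite ?mult_INR /=; field.
Qed.

Definition others (u : T) : seq T := [seq v <- r | v != u].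

Definition cost_data (u : T) : nat * nat * nat :=
  (count (unreachable u) (others u), sumn (map (twice_stretch u) (others u)),
   count (adj u) r).

End OneTwoMetric.

Definition cost_of (alpha Z : R) (c : nat * nat * nat) : R :=
  (INR c.1.1 * Z + INR c.1.2 / 2 + alpha * INR c.2)%R.

Lemma costE (T : finType) (d : T -> T -> nat) (r : seq T) (adj : rel T)
    alpha Z (s : profile T) u :
  metric12 d -> enum T = r -> (forall x y, (y \in s x) = adj x y) ->
  cost d alpha Z s u = cost_of alpha Z (cost_data d r adj u).
Proof.
move=> d12 r_enum s_adj; rewrite /cost /cost_of /=.
congr (_ + _ * INR _)%R; last first.
  rewrite cardE /enum_mem size_filter -enumT r_enum.
  by apply: eq_count => x; apply: s_adj.
rewrite r_enum -/(others r u).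
have : all (predC1 u) (others r u) by apply: filter_all.
elim: (others r u) => [_ | v l IHl /= /andP[vu /IHl ->]] /=; first lra.
rewrite (stretchE d12 r_enum _ s_adj) 1?eq_sym // !plus_INR; lra.
Qed.

Lemma cost_of_lt_unreachable alpha Z (a b : nat * nat * nat) :
  (0 <= alpha)%R -> a.1.1 < b.1.1 -> (INR a.1.2 / 2 + alpha * INR a.2 < Z)%R ->
  (cost_of alpha Z a < cost_of alpha Z b)%R.
Proof.
case: a b => [[a1 a2] a3] [[b1 b2] b3] /= alpha_ge0 /leP lt_ab a_lt_Z.
have := le_INR _ _ lt_ab; rewrite S_INR => le_ab.
have Z_gt0 : (0 < Z)%R.
  by have := pos_INR a2; have := Rmult_le_pos _ _ alpha_ge0 (pos_INR a3); lra.
have := Rmult_le_compat_r _ _ _ (Rlt_le _ _ Z_gt0) le_ab.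
have := pos_INR b2; have := Rmult_le_pos _ _ alpha_ge0 (pos_INR b3).
rewrite /cost_of /=; lra.
Qed.

Lemma cost_of_lt_degree alpha Z (a b : nat * nat * nat) :
  (0 < alpha)%R -> a.1.1 = b.1.1 -> a.1.2 <= b.1.2 -> a.2 < b.2 ->
  (cost_of alpha Z a < cost_of alpha Z b)%R.
Proof.
case: a b => [[a1 a2] a3] [[b1 b2] b3] /= alpha_gt0 -> /leP le_ab /leP lt_ab.
have := le_INR _ _ le_ab; have := le_INR _ _ lt_ab; rewrite S_INR.
rewrite /cost_of /=; nra.
Qed.

Definition cheaper (a b : nat * nat * nat) : bool :=
  [&& a.1.1 < b.1.1, a.1.2 <= 4 & a.2 <= 2] ||
  [&& a.1.1 == b.1.1, a.1.2 <= b.1.2 & a.2 < b.2].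

Lemma cost_of_cheaper alpha Z a b :
  (0 < alpha)%R -> (2 * alpha + 3 <= Z)%R -> cheaper a b ->
  (cost_of alpha Z a < cost_of alpha Z b)%R.
Proof.
move=> alpha_gt0 Z_ge /orP[/and3P[lt_ab /leP a2_le /leP a3_le] |].
  apply: cost_of_lt_unreachable => //; first lra.
  have := le_INR _ _ a2_le; have := le_INR _ _ a3_le; rewrite /=; nra.
by move=> /and3P[/eqP ? ? ?]; apply: cost_of_lt_degree.
Qed.

(* The shortest-path metric of the 4-cycle 0-1-3-2: the diagonals {0,3} and
   {1,2} are the pairs of points summing to 3. *)
Definition cycle4_dist (i j : 'I_4) : nat :=
  if i == j then 0 else if i + j == 3 then 2 else 1.

Lemma metric12_cycle4 : metric12 cycle4_dist.
Proof.
apply: metric12_of_dist => [x | x y | x y /negbTE]; rewrite /cycle4_dist ?eqxx //.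
  by rewrite eq_sym addnC.
by move=> ->; case: ifP.
Qed.

Definition points4 : seq 'I_4 :=
  [:: @Ordinal 4 0 isT; @Ordinal 4 1 isT; @Ordinal 4 2 isT; @Ordinal 4 3 isT].

Lemma enum_points4 : enum 'I_4 = points4.
Proof. by apply: (inj_map val_inj); rewrite val_enum_ord. Qed.

Lemma all_points4 (P : pred 'I_4) : all P points4 -> forall x, P x.
Proof. by move/allP => P_all x; apply: P_all; rewrite -enum_points4 mem_enum. Qed.

Definition buys (l : seq (seq nat)) : rel 'I_4 :=
  fun x y => nat_of_ord y \in nth [::] l x.

Definition network (l : seq (seq nat)) : profile 'I_4 :=
  [ffun x => [set y | buys l x y]].

Lemma networkE l x y : (y \in network l x) = buys l x y.
Proof. by rewrite ffunE inE. Qed.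

Definition improving_move (l l' : seq (seq nat)) (u : 'I_4) : bool :=
  [&& ~~ buys l' u u,
      all (fun x => (x == u) || (nth [::] l' x == nth [::] l x)) points4
    & cheaper (cost_data cycle4_dist points4 (buys l') u)
              (cost_data cycle4_dist points4 (buys l) u)].

Lemma improving_move_step alpha Z l l' u :
  (0 < alpha)%R -> (2 * alpha + 3 <= Z)%R -> improving_move l l' u ->
  improving_step cycle4_dist alpha Z (network l) (network l').
Proof.
move=> alpha_gt0 Z_ge /and3P[u_u' same cheap].
have net_l' : network l' = update (network l) u (network l' u).
  apply: update_eq => x xu; apply/setP => y; rewrite !networkE /buys.
  by have /all_points4/(_ x) := same; rewrite (negbTE xu) => /eqP ->.
exists u, (network l' u); rewrite -net_l' /valid_strategy networkE.
do !split => //.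
rewrite !(costE _ _ _ metric12_cycle4 enum_points4 (networkE _)).
exact: cost_of_cheaper.
Qed.

Definition network0 : seq (seq nat) := [:: [:: 1]; [:: 3]; [:: 1; 3]; [:: 0; 1]].

Definition networks : seq (seq (seq nat)) :=
  [:: [:: [:: 1];    [:: 0; 2]; [:: 1; 3]; [:: 0; 1]];
      [:: [:: 1];    [:: 0; 2]; [:: 0];    [:: 0; 1]];
      [:: [:: 2; 3]; [:: 0; 2]; [:: 0];    [:: 0; 1]];
      [:: [:: 2; 3]; [:: 0; 2]; [:: 0];    [:: 2]];
      [:: [:: 2; 3]; [:: 3];    [:: 0];    [:: 2]];
      [:: [:: 2; 3]; [:: 3];    [:: 1; 3]; [:: 2]];
      [:: [:: 1];    [:: 3];    [:: 1; 3]; [:: 2]];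
      network0].

Theorem theorem2p9 :
  forall alpha : R, (0 < alpha)%R ->
  exists (T : finType) (d : T -> T -> nat),
    metric12 d /\
    exists (s0 : profile T) (ss : seq (profile T)) (Z0 : R),
      forall Z : R, (Z0 <= Z)%R ->
        improving_response_cycle d alpha Z s0 ss.
Proof.
move=> alpha alpha_gt0; exists 'I_4, cycle4_dist.
split; first exact: metric12_cycle4.
exists (network network0), (map network networks), (2 * alpha + 3)%R => Z Z_ge.
apply: (improving_response_cycle_of_path
          (e := fun l l' => has (improving_move l l') points4)).
- by move=> l l' /hasP[u _]; apply: improving_move_step.
- by move=> u; rewrite /valid_strategy networkE; move: u; apply: all_points4.
- by [].
- by [].
- by vm_compute.
Qed.
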